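(* Let $G=(V,E)$ be a graph, $a$ a positive integer, and $V_D'\subseteq V$. Let $S_1,\dots,S_k$ be pairwise disjoint nonempty vertex sets such that, for every $u\in V_D'$, either $N^a(u)\subseteq S_i$ for some $i\in\{1,\dots,k\}$, or $N^a(u)\cap(S_1\cup\cdots\cup S_k)=\emptyset$. Let $$S=\{v\in V:\operatorname{dist}(v,S_1\cup\cdots\cup S_k)\le a\}.$$ If $G[S]$ is connected, then: 1. $N_S=\sum_{i=1}^k N_{S_i}$; 2. $D_S\le-1+\sum_{i=1}^k(D_{S_i}+2a+1)$.
   Context: $\operatorname{dist}$ is the shortest-path distance in $G$; $\operatorname{dist}(u,X)=\min_{x\in X}\operatorname{dist}(u,x)$; $N^r(v)=\{u:\operatorname{dist}(u,v)\le r\}$. For a vertex set $X$ (with $V_D'$ and $a$ fixed): - $N_X$ is the maximum size of a subset $X^*\subseteq X\cap V_D'$ such that $\operatorname{dist}(u,v)>2a$ for every pair of distinct $u,v\in X^*$; - $D_X$ is the diameter of the induced subgraph $G[X]$ (equal to $\infty$ if $G[X]$ is disconnected). *)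

From mathcomp Require Import all_boot.
Set Implicit Arguments. Unset Strict Implicit. Unset Printing Implicit Defensive.

Section Graphs.
Variable T : finType.

Definition simple_graph (e : rel T) : Prop := symmetric e /\ irreflexive e.

(* ball e r u = N^r(u) = { v | dist(u,v) <= r } (walks of length <= r). *)
Fixpoint ball (e : rel T) (r : nat) (u : T) : {set T} :=
  match r with
  | 0 => [set u]
  | r'.+1 => ball e r' u :|: [set y | [exists x in ball e r' u, e x y]]
  end.

Definition induced (e : rel T) (X : {set T}) : rel T :=
  fun x y => [&& x \in X, y \in X & e x y].

(* Shortest-path distance (meaningful when v is reachable from u):
   the least n with v \in ball e n u. *)
Definition dist (e : rel T) (u v : T) : nat :=
  find (fun n => v \in ball e n u) (iota 0 #|T|.+1).

Definition induced_connected (e : rel T) (X : {set T}) : bool :=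
  (X != set0) && [forall u in X, forall v in X, connect (induced e X) u v].

(* D_X : diameter of G[X]; None stands for infinity (G[X] disconnected). *)
Definition diam (e : rel T) (X : {set T}) : option nat :=
  if [forall u in X, forall v in X, connect (induced e X) u v]
  then Some (\max_(u in X) \max_(v in X) dist (induced e X) u v)
  else None.

Definition separated (e : rel T) (a : nat) (Y : {set T}) : bool :=
  [forall u in Y, forall v in Y, (u != v) ==> (v \notin ball e (2 * a) u)].

Definition Nnum (e : rel T) (a : nat) (VD X : {set T}) : nat :=
  \max_(Y : {set T} | (Y \subset X :&: VD) && separated e a Y) #|Y|.

Definition thicken (e : rel T) (a : nat) (U : {set T}) : {set T} :=
  [set v | [exists x in U, x \in ball e a v]].

End Graphs.

(* Extended naturals nat ∪ {∞} as option nat (None = ∞). *)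
Definition eadd (x y : option nat) : option nat :=
  match x, y with Some m, Some n => Some (m + n) | _, _ => None end.
Definition epred (x : option nat) : option nat :=
  match x with Some m => Some (m - 1) | None => None end.
Definition ele (x y : option nat) : bool :=
  match x, y with
  | _, None => true
  | None, Some _ => false
  | Some m, Some n => m <= n
  end.

From mathcomp Require Import all_boot.
Set Implicit Arguments. Unset Strict Implicit. Unset Printing Implicit Defensive.

(* Proof of Lemma B.7.  Write U for the union of the clusters S_i and
   S = N^a(U) for its a-thickening; T_i = N^a(S_i) is the thickening of one
   cluster, so that S is the union of the T_i.

   A vertex of V_D' lying in S has its whole
   a-ball inside one cluster, so it lies in U; hence a 2a-separated subset
   of S /\ V_D' splits along the clusters, giving N_S <= sum_i N_{S_i}.
   Conversely two such vertices in different clusters have disjoint a-balls,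
   hence are at distance > 2a, so the union of maximal separated subsets of
   the S_i is separated in S, giving the reverse inequality.

   Two vertices of T_i are joined inside G[S] by a walk
   of length D_{S_i} + 2a.  Starting from one cluster containing u and using
   the connectivity of G[S], we add clusters one at a time, each reached by
   one edge leaving the union of the T_i already collected; the collected
   T_i then stay within distance (sum of D_{S_i} + 2a + 1) - 1 from u.  When
   some D_{S_i} is infinite the bound is trivially true. *)

Section Balls.
Variable T : finType.
Implicit Types (e : rel T) (u v w x y : T) (X Y : {set T}).

Lemma ball_center e r u : u \in ball e r u.
Proof. by elim: r => [|r IH] /=; rewrite !inE ?IH ?eqxx. Qed.

Lemma ball_mono e r s u : r <= s -> ball e r u \subset ball e s u.
Proof.
move=> /subnK <-; elim: (s - r) => [|n IH] //=.
exact: subset_trans IH (subsetUl _ _).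
Qed.

Lemma ball_edge e r u x y : x \in ball e r u -> e x y -> y \in ball e r.+1 u.
Proof.
move=> hx exy; rewrite /= !inE; apply/orP; right.
by apply/existsP; exists x; rewrite hx.
Qed.

Lemma ball_succ e r u y : y \in ball e r.+1 u ->
  y \in ball e r u \/ exists2 x, x \in ball e r u & e x y.
Proof. by rewrite /= !inE => /orP[->|/existsP[x /andP[hx exy]]]; [left|right; exists x]. Qed.

Lemma ball_trans e r s u v w :
  v \in ball e r u -> w \in ball e s v -> w \in ball e (r + s) u.
Proof.
move=> hv; elim: s w => [|s IH] w; first by rewrite /= inE addn0 => /eqP ->.
rewrite addnS => /ball_succ[/IH h|[w' /IH h ew]]; last exact: ball_edge h ew.
exact: subsetP (ball_mono _ _ (leqnSn _)) _ h.
Qed.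

Lemma ball_split e r s u w :
  w \in ball e (r + s) u -> exists2 v, v \in ball e r u & w \in ball e s v.
Proof.
elim: s w => [|s IH] w; first by rewrite addn0 => h; exists w; rewrite /= ?inE.
rewrite addnS => /ball_succ[/IH [v hv hw]|[w' /IH [v hv hw] ew]]; exists v => //.
  exact: subsetP (ball_mono _ _ (leqnSn _)) _ hw.
exact: ball_edge hw ew.
Qed.

Lemma ball_sym e r u v : symmetric e -> v \in ball e r u -> u \in ball e r v.
Proof.
move=> se; elim: r v => [|r IH] v; first by rewrite /= !inE eq_sym.
move=> /ball_succ[/IH h|[v' /IH h ev]].
  exact: subsetP (ball_mono _ _ (leqnSn _)) _ h.
have hv' : v' \in ball e 1 v by apply: ball_edge (ball_center e 0 v) _; rewrite se.
by rewrite -add1n; apply: ball_trans hv' h.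
Qed.

Lemma ball_sub_rel e e' r u : subrel e e' -> ball e r u \subset ball e' r u.
Proof.
move=> hee; elim: r => [|r IH] //=; apply/subsetP => y /ball_succ[h|[x hx exy]].
  by rewrite inE (subsetP IH).
exact: ball_edge (subsetP IH _ hx) (hee _ _ exy).
Qed.

Lemma ball_induced e X r u : ball e r u \subset X ->
  ball e r u \subset ball (induced e X) r u.
Proof.
elim: r => [|r IH] // hsub; apply/subsetP => y hy.
have hr : ball e r u \subset X := subset_trans (ball_mono _ _ (leqnSn _)) hsub.
case: (ball_succ hy) => [h|[x hx exy]].
  exact: subsetP (ball_mono _ _ (leqnSn _)) _ (subsetP (IH hr) _ h).
apply: ball_edge (subsetP (IH hr) _ hx) _.
by rewrite /induced exy (subsetP hr) ?(subsetP hsub).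
Qed.

Lemma induced_sym e X : symmetric e -> symmetric (induced e X).
Proof. by move=> se x y; rewrite /induced se andbCA. Qed.

Lemma induced_mono e X Y : X \subset Y -> subrel (induced e X) (induced e Y).
Proof. by move=> hXY x y /and3P[hx hy exy]; rewrite /induced !(subsetP hXY) ?exy. Qed.

Lemma path_ball e x p : path e x p -> last x p \in ball e (size p) x.
Proof.
elim: p x => [|z p IH] x; first by rewrite /= inE.
rewrite [path _ _ _]/= [size _]/= [last _ _]/= -add1n => /andP[exz /IH h].
exact: ball_trans (ball_edge (ball_center e 0 x) exz) h.
Qed.

Lemma connect_ball e x y : connect e x y -> exists2 n, n < #|T| & y \in ball e n x.
Proof.
move=> /connectP[p hp ->]; have [p' hp' hu _] := shortenP hp.
exists (size p'); last exact: path_ball.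
by move/card_uniqP: hu => /= <-; apply: max_card.
Qed.

Lemma dist_le e x y n : y \in ball e n x -> dist e x y <= n.
Proof.
move=> h; rewrite /dist; have [hn|hn] := ltnP n #|T|.+1; last first.
  by apply: leq_trans (find_size _ _) _; rewrite size_iota.
rewrite leqNgt; apply/negP => /(before_find 0).
by rewrite nth_iota ?add0n ?h // ltnS.
Qed.

Lemma dist_ball e x y : connect e x y -> y \in ball e (dist e x y) x.
Proof.
move=> /connect_ball[n hn h].
have hs : has (fun n => y \in ball e n x) (iota 0 #|T|.+1).
  by apply/hasP; exists n => //; rewrite mem_iota add0n ltnS (ltnW hn).
have := hs; rewrite has_find size_iota => hf.
by move: (nth_find 0 hs); rewrite nth_iota ?add0n.
Qed.

Lemma diam_ball e X d x y :
  diam e X = Some d -> x \in X -> y \in X -> y \in ball (induced e X) d x.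
Proof.
rewrite /diam; case: ifP => // /forallP hc [<-] hx hy.
have /forall_inP/(_ _ hy) hxy := implyP (hc x) hx.
apply: subsetP (ball_mono _ _ _) _ (dist_ball hxy).
by apply: (bigmax_sup x) => //; apply: (bigmax_sup y).
Qed.

End Balls.

Section Thickening.
Variables (T : finType) (e : rel T) (a : nat).
Implicit Types (X Y : {set T}).

Lemma thickenP X v :
  reflect (exists2 x, x \in X & x \in ball e a v) (v \in thicken e a X).
Proof.
rewrite inE; apply: (iffP existsP) => [[x /andP[]]|[x hx hv]]; first by exists x.
by exists x; apply/andP.
Qed.

Lemma subset_thicken X : X \subset thicken e a X.
Proof. by apply/subsetP => x hx; apply/thickenP; exists x; rewrite ?ball_center. Qed.

Lemma thicken_bigcup (I : finType) (F : I -> {set T}) :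
  thicken e a (\bigcup_(i : I) F i) = \bigcup_(i : I) thicken e a (F i).
Proof.
apply/setP => v; apply/thickenP/bigcupP => [[x /bigcupP[i _ hx] hv]|[i _]].
  by exists i => //; apply/thickenP; exists x.
by move=> /thickenP[x hx hv]; exists x => //; apply/bigcupP; exists i.
Qed.

Lemma ball_sub_thicken X x : symmetric e -> x \in X -> ball e a x \subset thicken e a X.
Proof.
by move=> se hx; apply/subsetP => w hw; apply/thickenP; exists x; rewrite ?(ball_sym se hw).
Qed.

(* Two vertices of N^a(X) are joined inside any Y containing N^a(X) by a walk
   of length D_X + 2a: go to X, cross X, leave X. *)
Lemma thicken_diam d X Y y z :
  symmetric e -> diam e X = Some d -> thicken e a X \subset Y ->
  y \in thicken e a X -> z \in thicken e a X -> z \in ball (induced e Y) (a + d + a) y.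
Proof.
move=> se hd hXY /thickenP[x hx hxy] /thickenP[x' hx' hxz].
have hind x0 : x0 \in X -> ball e a x0 \subset ball (induced e Y) a x0.
  by move=> h0; apply/ball_induced/(subset_trans (ball_sub_thicken se h0) hXY).
have hyx : x \in ball (induced e Y) a y.
  exact: ball_sym (induced_sym _ se) (subsetP (hind _ hx) _ (ball_sym se hxy)).
have hxx' : x' \in ball (induced e Y) d x.
  have hXY' := @induced_mono _ e _ _ (subset_trans (subset_thicken X) hXY).
  exact: subsetP (ball_sub_rel _ _ hXY') _ (diam_ball hd hx hx').
exact: ball_trans (ball_trans hyx hxx') (subsetP (hind _ hx') _ (ball_sym se hxz)).
Qed.

End Thickening.

Section Separation.
Variables (T : finType) (e : rel T) (a : nat) (VD : {set T}).
Implicit Types (X Y Z : {set T}).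

Lemma separatedP Y : reflect
  (forall u v, u \in Y -> v \in Y -> u != v -> v \notin ball e (2 * a) u)
  (separated e a Y).
Proof.
apply: (iffP forall_inP) => [h u v hu hv|h u hu].
  by move/forall_inP/(_ v hv)/implyP: (h u hu).
by apply/forall_inP => v hv; apply/implyP; apply: h.
Qed.

Lemma separated_sub Y Z : Z \subset Y -> separated e a Y -> separated e a Z.
Proof.
move=> /subsetP hZ /(separatedP Y) h.
by apply/separatedP => u v /hZ hu /hZ hv; apply: h.
Qed.

Lemma Nnum_max X Y : Y \subset X :&: VD -> separated e a Y -> #|Y| <= Nnum e a VD X.
Proof. by move=> hY hsep; apply: leq_bigmax_cond; rewrite hY hsep. Qed.

Lemma Nnum_witness X : exists2 Y : {set T},
  (Y \subset X :&: VD) && separated e a Y & #|Y| = Nnum e a VD X.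
Proof.
have h0 : (set0 \subset X :&: VD) && separated e a set0.
  by rewrite sub0set; apply/separatedP => u v; rewrite inE.
have [|Y hY eqY] := @eq_bigmax_cond _
  [pred Y : {set T} | (Y \subset X :&: VD) && separated e a Y] (fun Y => #|Y|).
  by apply/card_gt0P; exists set0.
by exists Y; rewrite // -eqY.
Qed.

End Separation.

Section Packing.
Variables (T : finType) (e : rel T) (a : nat) (VD : {set T}) (k : nat)
  (Ss : 'I_k -> {set T}).
Hypothesis se : symmetric e.
Hypothesis hdisj : forall i j : 'I_k, i != j -> [disjoint Ss i & Ss j].
Hypothesis hVD : forall u, u \in VD ->
  (exists i : 'I_k, ball e a u \subset Ss i) \/
  [disjoint ball e a u & \bigcup_(i < k) Ss i].
Let U := \bigcup_(i < k) Ss i.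
Let S := thicken e a U.

Lemma cluster_uniq x i j : x \in Ss i -> x \in Ss j -> i = j.
Proof. by move=> hi hj; case: (eqVneq i j) => // /hdisj/disjointFr/(_ hi); rewrite hj. Qed.

(* The clusters partition U, so cardinalities of subsets of U split along them. *)
Lemma card_split (Z : {set T}) : Z \subset U -> #|Z| = \sum_(i < k) #|Z :&: Ss i|.
Proof.
move=> /subsetP hZ.
transitivity (\sum_(i < k) \sum_(x in Z) (x \in Ss i : nat)); last first.
  apply: eq_bigr => i _; rewrite -sum1_card big_mkcond [RHS]big_mkcond.
  by apply: eq_bigr => x _; rewrite inE; case: (x \in Z); case: (x \in Ss i).
rewrite exchange_big -sum1_card; apply: eq_bigr => x /hZ /bigcupP[j _ hj].
rewrite (bigD1 j) //= hj big1 // => i hij.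
by case hi: (x \in Ss i); rewrite // (cluster_uniq hi hj) eqxx in hij.
Qed.

Lemma VD_ball_inside u i : u \in VD -> u \in Ss i -> ball e a u \subset Ss i.
Proof.
move=> hu hi; case: (hVD hu) => [[j hj]|hd].
  by rewrite -(cluster_uniq (subsetP hj _ (ball_center e a u)) hi).
have hU : u \in U by apply/bigcupP; exists i.
by move: (disjointFr hd (ball_center e a u)); rewrite hU.
Qed.

Lemma VD_thicken_inside : S :&: VD \subset U.
Proof.
apply/subsetP => u /setIP[/thickenP[x hx hxu] hu].
case: (hVD hu) => [[i hi]|hd]; last by move: (disjointFr hd hxu); rewrite hx.
by apply/bigcupP; exists i => //; apply: subsetP hi _ (ball_center e a u).
Qed.

Lemma far_apart u v i j : u \in Ss i :&: VD -> v \in Ss j :&: VD -> i != j ->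
  v \notin ball e (2 * a) u.
Proof.
rewrite !inE => /andP[hui huV] /andP[hvj hvV] hij.
apply/negP; rewrite mul2n -addnn => /ball_split[w hwu /(ball_sym se) hwv].
move: (subsetP (VD_ball_inside huV hui) w hwu) (subsetP (VD_ball_inside hvV hvj) w hwv).
by move=> /cluster_uniq h /h eij; rewrite eij eqxx in hij.
Qed.

Lemma Nnum_le_sum : Nnum e a VD S <= \sum_(i < k) Nnum e a VD (Ss i).
Proof.
apply/bigmax_leqP => Y /andP[hY hsep].
have hYU : Y \subset U := subset_trans hY VD_thicken_inside.
rewrite (card_split hYU); apply: leq_sum => i _; apply: Nnum_max.
  by rewrite setIC setIS // (subset_trans hY (subsetIr _ _)).
exact: separated_sub (subsetIl _ _) hsep.
Qed.

Lemma sum_le_Nnum : \sum_(i < k) Nnum e a VD (Ss i) <= Nnum e a VD S.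
Proof.
have [Y hYok hYcard] := fin_all_exists2 (fun i => Nnum_witness e a VD (Ss i)).
have hYi i : Y i \subset Ss i :&: VD by case/andP: (hYok i).
pose Z := \bigcup_(i < k) Y i.
have hZi i : Z :&: Ss i = Y i.
  apply/setP => z; rewrite inE; apply/andP/idP => [[/bigcupP[j _ hz] hzi]|hz].
    by case/setIP: (subsetP (hYi j) z hz) => hzj _; rewrite (cluster_uniq hzi hzj).
  by split; [apply/bigcupP; exists i | case/setIP: (subsetP (hYi i) z hz)].
have hSsU i : Ss i \subset U := bigcup_sup i isT.
have hZU : Z \subset U.
  by apply/bigcupsP => i _; apply: subset_trans (hYi i) (subset_trans (subsetIl _ _) (hSsU i)).
rewrite (eq_bigr (fun i => #|Z :&: Ss i|)) => [|i _]; last by rewrite hZi hYcard.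
rewrite -card_split //; apply: Nnum_max.
  apply/bigcupsP => i _; apply: subset_trans (hYi i) (setSI _ _).
  exact: subset_trans (hSsU i) (subset_thicken e a U).
apply/separatedP => u v /bigcupP[i _ hu] /bigcupP[j _ hv] huv.
case: (eqVneq i j) => [eij|hij]; last first.
  exact: far_apart (subsetP (hYi i) _ hu) (subsetP (hYi j) _ hv) hij.
rewrite -eij in hv; case/andP: (hYok i) => _ /separatedP; exact.
Qed.

Lemma Nnum_thicken : Nnum e a VD S = \sum_(i < k) Nnum e a VD (Ss i).
Proof. by apply/eqP; rewrite eqn_leq Nnum_le_sum sum_le_Nnum. Qed.

End Packing.

Lemma addn_sandwich a m : a + m + a = m + 2 * a.
Proof. by rewrite [a + m]addnC -addnA addnn mul2n. Qed.

Lemma connect_exit (T : finType) (r : rel T) (X : {set T}) x y :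
  connect r x y -> x \in X -> y \notin X ->
  exists2 x', x' \in X & exists2 y', y' \notin X & r x' y'.
Proof.
move=> /connectP[p]; elim: p x => [|z p IH] x /=; first by move=> _ -> ->.
move=> /andP[rxz hp] hy hx hyX; case: (boolP (z \in X)) => hz.
  exact: IH hp hy hz hyX.
by exists x => //; exists z.
Qed.

Section Diameter.
Variables (T : finType) (e : rel T) (a k : nat) (Ss : 'I_k -> {set T}).
Hypothesis se : symmetric e.
Hypothesis hne : forall i, Ss i != set0.
Let S := thicken e a (\bigcup_(i < k) Ss i).
Hypothesis hcon : induced_connected e S.
Variable d : 'I_k -> nat.
Hypothesis hd : forall i, diam e (Ss i) = Some (d i).

Let Tj i := thicken e a (Ss i).
(* Each cluster costs its diameter, 2a to get in and out, and one edge. *)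
Let w i := d i + 2 * a + 1.
Let W (C : {set 'I_k}) := \sum_(i in C) w i.
(* Invariant of the growth argument: the clusters of C are close to u. *)
Let covered u (C : {set 'I_k}) :=
  \bigcup_(i in C) Tj i \subset ball (induced e S) (W C - 1) u.

Lemma S_bigcup : S = \bigcup_(i < k) Tj i.
Proof. exact: thicken_bigcup. Qed.

Lemma Tj_sub i : Tj i \subset S.
Proof. by rewrite S_bigcup; apply: bigcup_sup. Qed.

Lemma cover_start u i : u \in Tj i -> covered u [set i].
Proof.
move=> hu; rewrite /covered /W !big_set1 /w addnK; apply/subsetP => z hz.
by have := thicken_diam se (hd i) (Tj_sub i) hu hz; rewrite addn_sandwich.
Qed.

(* If C does not yet cover S, an edge of G[S] leaves the covered part and
   brings a new cluster j within the enlarged radius. *)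
Lemma cover_step u C v : C != set0 -> covered u C -> v \in S ->
  v \notin \bigcup_(i in C) Tj i -> exists2 j, j \notin C & covered u (j |: C).
Proof.
move=> hC hcov hvS hvC; have [i1 hi1] := set0Pn _ hC; have [x1 hx1] := set0Pn _ (hne i1).
have hx1T : x1 \in Tj i1 := subsetP (subset_thicken e a _) _ hx1.
have hx1C : x1 \in \bigcup_(i in C) Tj i by apply/bigcupP; exists i1.
have hc : connect (induced e S) x1 v.
  by case/andP: hcon => _ /forall_inP/(_ _ (subsetP (Tj_sub i1) _ hx1T))/forall_inP; apply.
have [x hxC [y hyC hxy]] := connect_exit hc hx1C hvC.
have /bigcupP[j _ hyj] : y \in \bigcup_(i < k) Tj i by rewrite -S_bigcup; case/and3P: hxy.
have hjC : j \notin C by apply: contra hyC => hjC; apply/bigcupP; exists j.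
exists j => //.
have hWC : 0 < W C by rewrite /W (bigD1 i1) //= /w addn1.
have hyu : y \in ball (induced e S) (W C) u.
  by rewrite -(prednK hWC) -subn1; apply: ball_edge (subsetP hcov _ hxC) hxy.
rewrite /covered bigcup_setU big_set1 /W big_setU1 //= -/(W C).
apply/subsetP => z /setUP[hz|hz].
  have := ball_trans hyu (thicken_diam se (hd j) (Tj_sub j) hyj hz).
  by rewrite /w addn1 addSn subn1 /= [_ + W C]addnC addn_sandwich.
by apply: subsetP (ball_mono _ _ _) _ (subsetP hcov _ hz); rewrite leq_sub2r ?leq_addl.
Qed.

Lemma cover_all u : u \in S ->
  exists C, covered u C /\ S \subset \bigcup_(i in C) Tj i.
Proof.
rewrite {1}S_bigcup => /bigcupP[i _ hu].
suff hgen : forall n C, #|~: C| < n -> C != set0 -> covered u C ->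
  exists C', covered u C' /\ S \subset \bigcup_(i in C') Tj i.
  apply: (hgen _ [set i] (ltnSn _)); last exact: cover_start.
  by apply/set0Pn; exists i; rewrite inE.
elim=> // n IH C hn hC hcov; case: (boolP (S \subset \bigcup_(i in C) Tj i)) => hS.
  by exists C.
have [v hvS hvC] := subsetPn hS; have [j hjC hcov'] := cover_step hC hcov hvS hvC.
apply: IH hcov'; last by apply/set0Pn; exists j; rewrite !inE eqxx.
move: (cardsC C) (cardsC (j |: C)); rewrite cardsU1 hjC => <-.
by rewrite add1n addSnnS => /addnI eqC; rewrite -ltnS eqC.
Qed.

Lemma diam_thicken_le : ele (diam e S) (Some (\sum_(i < k) w i - 1)).
Proof.
rewrite /diam; case/andP: hcon => _ ->.
apply/bigmax_leqP => u hu; apply/bigmax_leqP => v hv.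
have [C [hcov hS]] := cover_all hu; apply: dist_le.
apply: subsetP (ball_mono _ _ _) _ (subsetP hcov _ (subsetP hS _ hv)).
by rewrite leq_sub2r // /W big_mkcond /= leq_sum // => i _; case: ifP.
Qed.

End Diameter.

Lemma big_eadd_Some (I : finType) (x : I -> option nat) (n : I -> nat) :
  (forall i, x i = Some (n i)) -> \big[eadd/Some 0]_i x i = Some (\sum_i n i).
Proof. by move=> hx; apply: (big_ind2 (fun y m => y = Some m)) => // y1 m1 y2 m2 -> ->. Qed.

Lemma big_eadd_None (I : finType) (x : I -> option nat) i0 :
  x i0 = None -> \big[eadd/Some 0]_i x i = None.
Proof.
move=> hx; have : i0 \in index_enum I by rewrite mem_index_enum.
elim: (index_enum I) => // j r IH; rewrite inE big_cons => /orP[/eqP <-|/IH ->].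
  by rewrite hx.
by case: (x j).
Qed.

Theorem lemmaB7 (T : finType) (e : rel T) (a : nat) (VD : {set T})
  (k : nat) (Ss : 'I_k -> {set T}) :
  simple_graph e ->
  0 < a ->
  (forall i j : 'I_k, i != j -> [disjoint Ss i & Ss j]) ->
  (forall i : 'I_k, Ss i != set0) ->
  (forall u, u \in VD ->
     (exists i : 'I_k, ball e a u \subset Ss i) \/
     [disjoint ball e a u & \bigcup_(i < k) Ss i]) ->
  let S := thicken e a (\bigcup_(i < k) Ss i) in
  induced_connected e S ->
  Nnum e a VD S = \sum_(i < k) Nnum e a VD (Ss i) /\
  ele (diam e S)
      (epred (\big[eadd/Some 0]_(i < k) eadd (diam e (Ss i)) (Some (2 * a + 1)))).
Proof.
move=> [se _] _ hdisj hne hVD S hcon; split; first exact: Nnum_thicken.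
have [hfin|[i0 hi0]] : (forall i, exists n, diam e (Ss i) = Some n) \/
                       exists i0, diam e (Ss i0) = None.
  case: (boolP [forall i, diam e (Ss i) != None]) => [/forallP hall|].
    by left => i; move: (hall i); case: (diam e (Ss i)) => // n _; exists n.
  by rewrite negb_forall => /existsP[i0 /negPn/eqP hi0]; right; exists i0.
  have [d hd] := fin_all_exists hfin.
  rewrite (@big_eadd_Some _ _ (fun i => d i + 2 * a + 1)) => [|i]; last first.
    by rewrite hd /= addnA.
  exact: (diam_thicken_le se hne hcon hd).
by rewrite (big_eadd_None _ (i0 := i0)) ?hi0 //; case: (diam e S).
Qed.
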